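(* For every $n\ge 1$, the expected value of $\Phi_n$ under the Yule model is $$E_Y(\Phi_n)=n(n-1)-2n\sum_{i=2}^n\frac1i.$$
   Context: A binary phylogenetic tree with $n$ leaves is a rooted tree whose leaves are bijectively labeled by $\{1,\dots,n\}$ and whose internal nodes each have exactly two children; $\mathcal{BT}_n$ is the set of such trees up to isomorphism. $\kappa_T(v)$ is the number of leaves below $v$ and $V_{int}(T)$ the set of internal nodes. The depth $\delta_T(v)$ is the number of arcs from the root to $v$; $\varphi_T(i,j)=\delta_T(LCA_T(i,j))$ ($LCA$ = lowest common ancestor), and $\Phi(T)=\sum_{1\le i<j\le n}\varphi_T(i,j)$. $\Phi_n$ is the random variable $\Phi(T)$ for $T$ random in $\mathcal{BT}_n$. Under the Yule model $T\in\mathcal{BT}_n$ has probability $P_Y(T)=\frac{2^{n-1}}{n!}\prod_{v\in V_{int}(T)}\frac{1}{\kappa_T(v)-1}$, and $E_Y$ denotes expectation under it. *)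

From Stdlib Require Import Reals List Permutation Arith Bool.
Import ListNotations.
Open Scope R_scope.

(* A binary
   phylogenetic tree (an element of BT_n, i.e. up to isomorphism) is
   represented by any planar tree in its class; isomorphism = swapping
   children at internal nodes. *)
Inductive tree : Type :=
| Leaf : nat -> tree
| Node : tree -> tree -> tree.

Fixpoint leaves (T : tree) : list nat :=
  match T with
  | Leaf i => [i]
  | Node l r => leaves l ++ leaves r
  end.

Definition kappa (T : tree) : nat := length (leaves T).

Definition valid (n : nat) (T : tree) : Prop :=
  Permutation (leaves T) (seq 1 n).

Inductive iso : tree -> tree -> Prop :=
| iso_leaf : forall i, iso (Leaf i) (Leaf i)
| iso_node : forall a b c d, iso a c -> iso b d -> iso (Node a b) (Node c d)
| iso_swap : forall a b c d, iso a d -> iso b c -> iso (Node a b) (Node c d).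

Definition BT_reps (n : nat) (L : list tree) : Prop :=
  (forall T, In T L -> valid n T) /\
  (forall T, valid n T -> exists T', In T' L /\ iso T T') /\
  ForallOrdPairs (fun a b => ~ iso a b) L.

Fixpoint yule_prod (T : tree) : R :=
  match T with
  | Leaf _ => 1
  | Node l r => / (INR (kappa (Node l r)) - 1) * yule_prod l * yule_prod r
  end.

Definition P_Y (n : nat) (T : tree) : R :=
  2 ^ (n - 1) / INR (fact n) * yule_prod T.

Definition mem (i : nat) (T : tree) : bool := existsb (Nat.eqb i) (leaves T).

Fixpoint phi (T : tree) (i j : nat) : nat :=
  match T with
  | Leaf _ => 0
  | Node l r =>
      if andb (mem i l) (mem j l) then S (phi l i j)
      else if andb (mem i r) (mem j r) then S (phi r i j)
      else 0
  end.

Definition sumR (l : list R) : R := fold_right Rplus 0 l.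

Definition Phi (n : nat) (T : tree) : R :=
  sumR (map (fun i => sumR (map (fun j => INR (phi T i j)) (seq (S i) (n - i))))
            (seq 1 n)).

Definition E_Y_Phi (n : nat) (L : list tree) : R :=
  sumR (map (fun T => P_Y n T * Phi n T) L).

Definition harm2 (n : nat) : R := sumR (map (fun i => / INR i) (seq 2 (n - 1))).

(* 1. Φ(T) = Σ_{i<j} depth(LCA(i,j)) counts, for each pair of leaves, the
      non-root nodes above both; grouping by node gives the recursion
      coph (l,r) = coph l + coph r + C(κ l,2) + C(κ r,2)   (Phi_coph).
   2. [reps n (seq 1 n)] is an explicit system of representatives of BT_n:
      a tree on leaves m :: t is a node whose left subtree contains m, one for
      each split of t between the subtrees (reps_BT).  Since P_Y and Φ are
      isomorphism invariants, every system of representatives gives the same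
      expectation (sum_over_reps_invariant, E_Y_Phi_invariant).
   3. On [reps], the Yule mass Σ yule_prod and Σ yule_prod·coph obey a
      recursion over root splits.  Counting splits by size
      (sum_splits_factorial) and averaging over the size of the side holding
      the first leaf solves it: the sums are k!/2^(k-1) and k!/2^(k-1) times
      the claimed mean (reps_sums). *)

From Stdlib Require Import Reals List Permutation Arith.
From Stdlib Require Import Lia Lra.
Import ListNotations.
Open Scope R_scope.

Lemma sumR_app (l1 l2 : list R) : sumR (l1 ++ l2) = sumR l1 + sumR l2.
Proof. induction l1; simpl; [ring|]. rewrite IHl1; ring. Qed.

Lemma sumR_perm (l l' : list R) : Permutation l l' -> sumR l = sumR l'.
Proof. induction 1; simpl; lra. Qed.

Lemma sumR_ext {A} (f g : A -> R) (l : list A) :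
  (forall x, In x l -> f x = g x) -> sumR (map f l) = sumR (map g l).
Proof. induction l; simpl; intros H; auto. rewrite H, IHl; auto. Qed.

Lemma sumR_zero {A} (l : list A) : sumR (map (fun _ => 0) l) = 0.
Proof. induction l; simpl; [reflexivity|]. rewrite IHl; ring. Qed.

Lemma sumR_lin2 {A} (a b : R) (f g : A -> R) (l : list A) :
  sumR (map (fun x => a * f x + b * g x) l) = a * sumR (map f l) + b * sumR (map g l).
Proof. induction l; simpl; [ring|]. rewrite IHl; ring. Qed.

Lemma sumR_plus {A} (f g : A -> R) (l : list A) :
  sumR (map (fun x => f x + g x) l) = sumR (map f l) + sumR (map g l).
Proof. induction l; simpl; [ring|]. rewrite IHl; ring. Qed.

Lemma sumR_scal {A} (c : R) (f : A -> R) (l : list A) :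
  sumR (map (fun x => c * f x) l) = c * sumR (map f l).
Proof. induction l; simpl; [ring|]. rewrite IHl; ring. Qed.

Lemma sumR_flat_map {A B} (h : B -> R) (g : A -> list B) (l : list A) :
  sumR (map h (flat_map g l)) = sumR (map (fun x => sumR (map h (g x))) l).
Proof. induction l; simpl; auto. rewrite map_app, sumR_app, IHl; auto. Qed.

Section OrdPairs.
Variables (A : Type) (Rel : A -> A -> Prop).

Lemma ForallOrdPairs_app (l1 l2 : list A) :
  ForallOrdPairs Rel l1 -> ForallOrdPairs Rel l2 ->
  (forall x y, In x l1 -> In y l2 -> Rel x y) -> ForallOrdPairs Rel (l1 ++ l2).
Proof.
  induction 1; intros H2 H3; simpl; auto.
  constructor.
  - apply Forall_app; split; auto. apply Forall_forall; intros; apply H3; simpl; auto.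
  - apply IHForallOrdPairs; auto. intros; apply H3; simpl; auto.
Qed.

Lemma ForallOrdPairs_weaken (Rel0 : A -> A -> Prop) (l : list A) :
  (forall x y, In x l -> In y l -> Rel0 x y -> Rel x y) ->
  ForallOrdPairs Rel0 l -> ForallOrdPairs Rel l.
Proof.
  intros H F; induction F; constructor.
  - rewrite Forall_forall in *. intros; apply H; simpl; auto.
  - apply IHF; intros; apply H; simpl; auto.
Qed.

Lemma ForallOrdPairs_map {B} (h : B -> A) (l : list B) :
  ForallOrdPairs (fun x y => Rel (h x) (h y)) l -> ForallOrdPairs Rel (map h l).
Proof.
  induction 1; simpl; constructor; auto.
  rewrite Forall_forall in *. intros x Hx. apply in_map_iff in Hx as [y [<- Hy]]; auto.
Qed.

Lemma ForallOrdPairs_flat_map {B} (g : B -> list A) (l : list B) :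
  (forall x, In x l -> ForallOrdPairs Rel (g x)) ->
  ForallOrdPairs (fun x y => forall u v, In u (g x) -> In v (g y) -> Rel u v) l ->
  ForallOrdPairs Rel (flat_map g l).
Proof.
  intros H F; induction F; simpl; [constructor|].
  apply ForallOrdPairs_app.
  - apply H; simpl; auto.
  - apply IHF; intros; apply H; simpl; auto.
  - intros u v Hu Hv. apply in_flat_map in Hv as [y [Hy Hv]].
    rewrite Forall_forall in H0. eapply H0; eauto.
Qed.

Lemma ForallOrdPairs_remove (l1 l2 : list A) (c : A) :
  ForallOrdPairs Rel (l1 ++ c :: l2) ->
  ForallOrdPairs Rel (l1 ++ l2) /\ (forall t, In t (l1 ++ l2) -> Rel t c \/ Rel c t).
Proof.
  induction l1; simpl; intro H; inversion H; subst.
  - split; auto. intros t Ht. right. rewrite Forall_forall in H2; auto.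
  - destruct (IHl1 H3) as [H4 H5]. rewrite Forall_forall in H2. split.
    + constructor; auto. apply Forall_forall; intros; apply H2.
      apply in_app_or in H0 as [|]; apply in_or_app; simpl; auto.
    + intros t [<-|Ht]; auto. left. apply H2. apply in_or_app; simpl; auto.
Qed.

End OrdPairs.

Section Representatives.
Variables (A : Type) (eqv : A -> A -> Prop).
Hypothesis eqv_sym : forall a b, eqv a b -> eqv b a.
Hypothesis eqv_trans : forall a b c, eqv a b -> eqv b c -> eqv a c.

Definition covered (L C : list A) : Prop :=
  forall x, In x L -> exists y, In y C /\ eqv x y.

Definition pairwise_inequivalent (L : list A) : Prop :=
  ForallOrdPairs (fun a b => ~ eqv a b) L.

Theorem sum_over_reps_invariant (P : A -> Prop) (h : A -> R) :
  (forall a b, P a -> eqv a b -> h a = h b) ->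
  forall L C, (forall x, In x L -> P x) -> covered L C -> covered C L ->
  pairwise_inequivalent L -> pairwise_inequivalent C ->
  sumR (map h L) = sumR (map h C).
Proof.
  intros Hh L. induction L as [|a L IH]; intros C HP HLC HCL FL FC.
  - destruct C as [|c C]; auto. destruct (HCL c) as [? [[] _]]; simpl; auto.
  - destruct (HLC a) as [c [Hc Hac]]; simpl; auto.
    apply in_split in Hc as [C1 [C2 ->]].
    inversion FL as [|? ? Fa FL']; subst.
    destruct (ForallOrdPairs_remove _ _ _ _ _ FC) as [FC' Hc].
    rewrite map_app; simpl map; rewrite (sumR_perm (map h C1 ++ h c :: map h C2) (h c :: map h C1 ++ map h C2))
      by (simpl; symmetry; apply Permutation_middle).
    simpl. rewrite <- map_app, (Hh a c); [| apply HP; simpl; auto | auto].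
    f_equal. apply IH; auto.
    + intros; apply HP; simpl; auto.
    + intros T HT. destruct (HLC T) as [T' [HT' Hi]]; simpl; auto.
      apply in_app_or in HT' as [HT'|[<-|HT']].
      * exists T'; split; auto; apply in_or_app; auto.
      * exfalso. rewrite Forall_forall in Fa. apply (Fa T HT); eauto.
      * exists T'; split; auto; apply in_or_app; simpl; auto.
    + intros T HT. destruct (HCL T) as [T' [[<-|HT'] Hi]].
      * apply in_app_or in HT as [|]; apply in_or_app; simpl; auto.
      * exfalso. destruct (Hc T HT) as [Hn|Hn]; apply Hn; eauto.
      * exists T'; auto.
Qed.

End Representatives.

Lemma leaves_nonempty (T : tree) : (1 <= length (leaves T))%nat.
Proof. induction T; simpl; auto. rewrite length_app; lia. Qed.

Lemma iso_refl (T : tree) : iso T T.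
Proof. induction T; constructor; auto. Qed.

Lemma iso_sym (a b : tree) : iso a b -> iso b a.
Proof. induction 1; [constructor | apply iso_node | apply iso_swap]; auto. Qed.

Lemma iso_trans (a b c : tree) : iso a b -> iso b c -> iso a c.
Proof.
  intro H; revert c; induction H; intros e He; auto.
  - inversion He; subst; [apply iso_node | apply iso_swap]; auto.
  - inversion He; subst; [apply iso_swap | apply iso_node]; auto.
Qed.

Lemma iso_leaves (a b : tree) : iso a b -> Permutation (leaves a) (leaves b).
Proof.
  induction 1; simpl; auto.
  - apply Permutation_app; auto.
  - eapply perm_trans; [apply Permutation_app; eauto | apply Permutation_app_comm].
Qed.

Lemma iso_kappa (a b : tree) : iso a b -> kappa a = kappa b.
Proof. intro H. apply Permutation_length, iso_leaves, H. Qed.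

Lemma iso_valid (n : nat) (a b : tree) : valid n a -> iso a b -> valid n b.
Proof. intros Ha H. eapply perm_trans; [symmetry; apply iso_leaves, H | exact Ha]. Qed.

Lemma iso_yule_prod (a b : tree) : iso a b -> yule_prod a = yule_prod b.
Proof.
  induction 1 as [| a b c d H1 IH1 H2 IH2 | a b c d H1 IH1 H2 IH2]; simpl; auto.
  - rewrite IH1, IH2. assert (kappa (Node a b) = kappa (Node c d)) as ->; auto.
    apply iso_kappa; constructor; auto.
  - rewrite IH1, IH2. assert (kappa (Node a b) = kappa (Node c d)) as ->; [|ring].
    apply iso_kappa; apply iso_swap; auto.
Qed.

Definition binom2 (k : nat) : R := INR k * (INR k - 1) / 2.

(* The cophenetic recursion: every non-root node [v] contributes C(κ v, 2),
   the number of leaf pairs having [v] as a common ancestor. *)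
Fixpoint coph (T : tree) : R :=
  match T with
  | Leaf _ => 0
  | Node l r => coph l + coph r + binom2 (kappa l) + binom2 (kappa r)
  end.

Lemma iso_coph (a b : tree) : iso a b -> coph a = coph b.
Proof.
  induction 1; simpl; auto.
  - rewrite IHiso1, IHiso2, (iso_kappa a c), (iso_kappa b d); auto.
  - rewrite IHiso1, IHiso2, (iso_kappa a d), (iso_kappa b c); auto. ring.
Qed.

Lemma mem_In (i : nat) (T : tree) : mem i T = true <-> In i (leaves T).
Proof.
  unfold mem. rewrite existsb_exists. split.
  - intros [x [Hx He]]. apply Nat.eqb_eq in He; subst; auto.
  - intros H; exists i; split; auto; apply Nat.eqb_refl.
Qed.

Lemma mem_false (i : nat) (T : tree) : mem i T = false <-> ~ In i (leaves T).
Proof. rewrite <- mem_In. destruct (mem i T); split; congruence. Qed.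

Lemma phi_absent (T : tree) (i j : nat) :
  mem i T = false \/ mem j T = false -> phi T i j = 0%nat.
Proof.
  induction T; simpl; auto. intro H.
  unfold mem in H; simpl in H. rewrite !existsb_app in H.
  unfold mem. destruct H as [H|H]; apply Bool.orb_false_iff in H as [H1 H2];
  rewrite H1, H2; simpl; rewrite ?Bool.andb_false_r; auto.
Qed.

Lemma NoDup_app_disjoint {A} (l1 l2 : list A) (x : A) :
  NoDup (l1 ++ l2) -> In x l1 -> In x l2 -> False.
Proof.
  induction l1; simpl; intros ND H1 H2; [auto|]. inversion ND; subst.
  destruct H1 as [<-|H1]; [apply H3; apply in_or_app; auto | eauto].
Qed.

Definition indic (T : tree) (i : nat) : R := if mem i T then 1 else 0.

(* The root contributes nothing; a pair below a child gains one arc. *)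
Lemma phi_node (l r : tree) (i j : nat) : NoDup (leaves (Node l r)) ->
  INR (phi (Node l r) i j) =
  indic l i * indic l j + indic r i * indic r j + INR (phi l i j) + INR (phi r i j).
Proof.
  intro ND. simpl in ND.
  assert (Hdisj : forall x, mem x l = true -> mem x r = false).
  { intros x Hx. apply mem_In in Hx. apply mem_false. intro Hr.
    eapply NoDup_app_disjoint; eauto. }
  cbn -[INR]. unfold indic.
  destruct (mem i l) eqn:Hil, (mem j l) eqn:Hjl, (mem i r) eqn:Hir, (mem j r) eqn:Hjr;
    try (pose proof (Hdisj i Hil); congruence); try (pose proof (Hdisj j Hjl); congruence);
    cbn -[INR]; rewrite ?(phi_absent l i j), ?(phi_absent r i j) by auto;
    rewrite ?S_INR; simpl INR; ring.
Qed.

Definition pair_sum (n : nat) (g : nat -> nat -> R) : R :=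
  sumR (map (fun i => sumR (map (fun j => g i j) (seq (S i) (n - i)))) (seq 1 n)).

Lemma pair_sum_plus (n : nat) (f g : nat -> nat -> R) :
  pair_sum n (fun i j => f i j + g i j) = pair_sum n f + pair_sum n g.
Proof.
  unfold pair_sum. rewrite <- sumR_plus. apply sumR_ext. intros. apply sumR_plus.
Qed.

Lemma pair_sum_indicator (ef : nat -> R) (n : nat) :
  (forall i, ef i * ef i = ef i) ->
  forall m a, (a + m = S n)%nat ->
  2 * sumR (map (fun i => sumR (map (fun j => ef i * ef j) (seq (S i) (n - i)))) (seq a m))
  = sumR (map ef (seq a m)) * sumR (map ef (seq a m)) - sumR (map ef (seq a m)).
Proof.
  intros He m. induction m; intros a Ha; simpl; [ring|].
  replace (n - a)%nat with m by lia.
  rewrite sumR_scal. specialize (IHm (S a) ltac:(lia)).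
  assert (H := He a). nra.
Qed.

Lemma sum_indic (T : tree) (n : nat) : NoDup (leaves T) -> incl (leaves T) (seq 1 n) ->
  sumR (map (indic T) (seq 1 n)) = INR (kappa T).
Proof.
  intros ND Hi.
  transitivity (INR (length (filter (fun i => mem i T) (seq 1 n)))).
  - unfold indic. generalize (seq 1 n). induction l as [|x l IH]; [reflexivity|].
    simpl. rewrite IH. destruct (mem x T); simpl length; rewrite ?S_INR; ring.
  - f_equal. apply Permutation_length, NoDup_Permutation.
    + apply NoDup_filter, seq_NoDup.
    + exact ND.
    + intro x. rewrite filter_In, mem_In. split; [tauto | auto].
Qed.

Lemma pair_sum_indic (T : tree) (n : nat) :
  NoDup (leaves T) -> incl (leaves T) (seq 1 n) ->
  pair_sum n (fun i j => indic T i * indic T j) = binom2 (kappa T).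
Proof.
  intros ND Hi. unfold pair_sum, binom2.
  assert (Hidem : forall i, indic T i * indic T i = indic T i)
    by (intro i; unfold indic; destruct (mem i T); ring).
  pose proof (pair_sum_indicator (indic T) n Hidem n 1 ltac:(lia)) as H.
  rewrite sum_indic in H by auto. lra.
Qed.

Lemma Phi_coph (n : nat) (T : tree) :
  NoDup (leaves T) -> incl (leaves T) (seq 1 n) -> Phi n T = coph T.
Proof.
  induction T as [k|l IHl r IHr]; intros ND Hi.
  - unfold Phi. simpl phi. rewrite (sumR_ext _ (fun _ => 0)), sumR_zero; auto.
    intros. apply sumR_zero.
  - assert (NDl := NoDup_app_remove_r _ _ ND). assert (NDr := NoDup_app_remove_l _ _ ND).
    assert (Hil : incl (leaves l) (seq 1 n)) by (intros x Hx; apply Hi, in_or_app; auto).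
    assert (Hir : incl (leaves r) (seq 1 n)) by (intros x Hx; apply Hi, in_or_app; auto).
    change (Phi n (Node l r)) with (pair_sum n (fun i j => INR (phi (Node l r) i j))).
    unfold pair_sum. rewrite (sumR_ext _ (fun i => sumR (map (fun j =>
      (indic l i * indic l j + indic r i * indic r j) + (INR (phi l i j) + INR (phi r i j)))
      (seq (S i) (n - i))))) by (intros; apply sumR_ext; intros; rewrite phi_node by auto; ring).
    fold (pair_sum n (fun i j => (indic l i * indic l j + indic r i * indic r j)
                                 + (INR (phi l i j) + INR (phi r i j)))).
    rewrite !pair_sum_plus, !pair_sum_indic by auto.
    unfold pair_sum, Phi in *. rewrite IHl, IHr by auto. simpl. ring.
Qed.

Lemma valid_Phi (n : nat) (T : tree) : valid n T -> Phi n T = coph T.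
Proof.
  intro H. apply Phi_coph.
  - eapply Permutation_NoDup; [symmetry; exact H | apply seq_NoDup].
  - intros x Hx. eapply Permutation_in; eauto.
Qed.

Fixpoint splits (t : list nat) : list (list nat * list nat) :=
  match t with
  | [] => [([], [])]
  | x :: t' => map (fun p => (x :: fst p, snd p)) (splits t') ++
               map (fun p => (fst p, x :: snd p)) (splits t')
  end.

(* [reps f s]: one tree per isomorphism class of trees with leaf set [s]
   (when [length s <= f]): the first leaf of [s] goes to the left subtree. *)
Fixpoint reps (f : nat) (s : list nat) : list tree :=
  match f with
  | 0 => []
  | S f' =>
    match s with
    | [] => []
    | [m] => [Leaf m]
    | m :: t => flat_map (fun p => flat_map (fun a => map (Node a) (reps f' (snd p)))
                                            (reps f' (m :: fst p))) (splits t)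
    end
  end.

Lemma splits_perm (t : list nat) (p : list nat * list nat) :
  In p (splits t) -> Permutation t (fst p ++ snd p).
Proof.
  revert p; induction t as [|x t IH]; simpl; intros p Hp.
  - destruct Hp as [<-|[]]; simpl; auto.
  - apply in_app_or in Hp as [Hp|Hp]; apply in_map_iff in Hp as [q [<- Hq]]; simpl.
    + constructor; auto.
    + eapply perm_trans; [|apply Permutation_middle]. constructor; auto.
Qed.

Lemma splits_filter (g : nat -> bool) (t : list nat) :
  In (filter g t, filter (fun x => negb (g x)) t) (splits t).
Proof.
  induction t as [|x t IH]; simpl; auto.
  apply in_or_app. destruct (g x); simpl; [left | right];
  apply in_map_iff; eexists; (split; [|exact IH]); reflexivity.
Qed.

Lemma splits_distinct (t : list nat) : NoDup t ->
  ForallOrdPairs (fun p q => ~ Permutation (fst p) (fst q)) (splits t).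
Proof.
  induction t as [|x t IH]; simpl; intro ND.
  - repeat constructor.
  - inversion ND as [|? ? Hx ND']; subst. specialize (IH ND'). apply ForallOrdPairs_app.
    + apply ForallOrdPairs_map. simpl. eapply ForallOrdPairs_weaken; [|exact IH].
      intros p q _ _ Hn Hp. apply Hn. eapply Permutation_cons_inv; eauto.
    + apply ForallOrdPairs_map. simpl. auto.
    + intros u v Hu Hv. apply in_map_iff in Hu as [p [<- Hp]].
      apply in_map_iff in Hv as [q [<- Hq]]. simpl. intro HP.
      apply Hx, (Permutation_in _ (Permutation_sym (splits_perm _ _ Hq))), in_or_app. left.
      eapply Permutation_in; [exact HP | left; auto].
Qed.

Lemma reps_cons (f m y : nat) (t : list nat) :
  reps (S f) (m :: y :: t) =
  flat_map (fun p => flat_map (fun a => map (Node a) (reps f (snd p)))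
                              (reps f (m :: fst p))) (splits (y :: t)).
Proof. reflexivity. Qed.

Lemma In_reps_cons (f m y : nat) (t : list nat) (T : tree) :
  In T (reps (S f) (m :: y :: t)) ->
  exists p a b, In p (splits (y :: t)) /\ In a (reps f (m :: fst p)) /\
                In b (reps f (snd p)) /\ T = Node a b.
Proof.
  rewrite reps_cons. intro H. apply in_flat_map in H as [p [Hp H]].
  apply in_flat_map in H as [a [Ha H]]. apply in_map_iff in H as [b [<- Hb]].
  exists p, a, b; auto.
Qed.

Lemma reps_valid (f : nat) (s : list nat) (T : tree) :
  In T (reps f s) -> Permutation (leaves T) s.
Proof.
  revert s T; induction f as [|f IH]; intros s T H; [destruct H|].
  destruct s as [|m [|y t]]; [destruct H | destruct H as [<-|[]]; simpl; auto |].
  apply In_reps_cons in H as [p [a [b [Hp [Ha [Hb ->]]]]]].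
  simpl. apply IH in Ha. apply IH in Hb. apply splits_perm in Hp.
  eapply perm_trans; [apply Permutation_app; eauto|]. simpl. constructor. symmetry; auto.
Qed.

Lemma leaves_single (T : tree) (m : nat) : Permutation (leaves T) [m] -> T = Leaf m.
Proof.
  intro H. destruct T as [k|l r].
  - simpl in H. apply Permutation_length_1 in H. subst; auto.
  - apply Permutation_length in H. simpl in H. rewrite length_app in H.
    pose proof (leaves_nonempty l); pose proof (leaves_nonempty r); lia.
Qed.

Lemma partition_by_subtree (a0 b0 : tree) (m : nat) (t : list nat) :
  NoDup (m :: t) -> Permutation (leaves a0 ++ leaves b0) (m :: t) -> In m (leaves a0) ->
  Permutation (leaves a0) (m :: filter (fun x => mem x a0) t) /\
  Permutation (leaves b0) (filter (fun x => negb (mem x a0)) t).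
Proof.
  intros ND HP Hm.
  assert (ND0 : NoDup (leaves a0 ++ leaves b0))
    by (eapply Permutation_NoDup; [symmetry; exact HP | exact ND]).
  inversion ND as [|? ? Hmt NDt]; subst.
  assert (Hin : forall x, In x (leaves a0) \/ In x (leaves b0) <-> In x (m :: t)).
  { intro x. rewrite <- in_app_iff. split; apply Permutation_in; auto. now symmetry. }
  split; apply NoDup_Permutation.
  - eapply NoDup_app_remove_r; eauto.
  - constructor; [rewrite filter_In; tauto | apply NoDup_filter; auto].
  - intro x. simpl. rewrite filter_In, mem_In. split.
    + intro Hx. destruct (proj1 (Hin x) (or_introl Hx)); tauto.
    + intros [<-|[]]; auto.
  - eapply NoDup_app_remove_l; eauto.
  - apply NoDup_filter; auto.
  - intro x. rewrite filter_In, Bool.negb_true_iff, mem_false. split.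
    + intro Hx. assert (~ In x (leaves a0)) by (intro; eapply NoDup_app_disjoint; eauto).
      destruct (proj1 (Hin x) (or_intror Hx)) as [<-|]; [contradiction | auto].
    + intros [Hx Hn]. destruct (proj2 (Hin x) (or_intror Hx)); tauto.
Qed.

Lemma reps_complete (f : nat) (s : list nat) (T : tree) :
  (length s <= f)%nat -> NoDup s -> Permutation (leaves T) s ->
  exists T', In T' (reps f s) /\ iso T T'.
Proof.
  revert s T; induction f as [|f IH]; intros s T Hl ND HP.
  - destruct s; simpl in Hl; [|lia]. apply Permutation_length in HP.
    pose proof (leaves_nonempty T); simpl in HP; lia.
  - destruct s as [|m [|y t]].
    + apply Permutation_length in HP. pose proof (leaves_nonempty T); simpl in HP; lia.
    + apply leaves_single in HP as ->. exists (Leaf m); split; [left; auto | apply iso_refl].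
    + destruct T as [k|l r]; [apply Permutation_length in HP; simpl in HP; lia|].
      (* orient the root so that [m] lies in the left subtree [a0] *)
      assert (Hnode : forall a0 b0, Permutation (leaves a0 ++ leaves b0) (m :: y :: t) ->
                In m (leaves a0) -> exists a' b',
                In (Node a' b') (reps (S f) (m :: y :: t)) /\ iso a0 a' /\ iso b0 b').
      { intros a0 b0 HP0 Hm.
        destruct (partition_by_subtree a0 b0 m (y :: t) ND HP0 Hm) as [PA PB].
        assert (Hlen := Permutation_length HP0). rewrite length_app in Hlen.
        pose proof (leaves_nonempty a0); pose proof (leaves_nonempty b0).
        inversion ND as [|? ? _ NDt]; subst.
        destruct (IH (m :: filter (fun x => mem x a0) (y :: t)) a0) as [a' [Ha' Ia]]; auto.
        { rewrite <- (Permutation_length PA). simpl in *; lia. }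
        { eapply Permutation_NoDup; [exact PA | eapply NoDup_app_remove_r, Permutation_NoDup;
            [symmetry; exact HP0 | exact ND]]. }
        destruct (IH (filter (fun x => negb (mem x a0)) (y :: t)) b0) as [b' [Hb' Ib]]; auto.
        { rewrite <- (Permutation_length PB). simpl in *; lia. }
        { apply NoDup_filter; auto. }
        exists a', b'. split; auto. rewrite reps_cons. apply in_flat_map.
        exists (filter (fun x => mem x a0) (y :: t), filter (fun x => negb (mem x a0)) (y :: t)).
        split; [apply splits_filter|].
        apply in_flat_map. exists a'; split; auto. apply in_map; auto. }
      simpl in HP. destruct (in_app_or (leaves l) (leaves r) m) as [Hm|Hm].
      { eapply Permutation_in; [symmetry; exact HP | left; auto]. }
      * destruct (Hnode l r HP Hm) as [a' [b' [H1 [H2 H3]]]].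
        exists (Node a' b'); split; auto. apply iso_node; auto.
      * destruct (Hnode r l) as [a' [b' [H1 [H2 H3]]]]; auto.
        { eapply perm_trans; [apply Permutation_app_comm | exact HP]. }
        exists (Node a' b'); split; auto. apply iso_swap; auto.
Qed.

Section RepsDistinct.
Variables (f m : nat) (t : list nat).
Hypothesis ND : NoDup (m :: t).

Lemma left_right_noniso (p q : list nat * list nat) (a b : tree) :
  In q (splits t) -> In a (reps f (m :: fst p)) -> In b (reps f (snd q)) -> ~ iso a b.
Proof.
  intros Hq Ha Hb Hi. inversion ND as [|? ? Hmt _]; subst.
  apply iso_leaves in Hi. apply reps_valid in Ha. apply reps_valid in Hb.
  apply splits_perm in Hq.
  apply Hmt, (Permutation_in _ (Permutation_sym Hq)), in_or_app; right.
  eapply Permutation_in; [exact Hb|]. eapply Permutation_in; [exact Hi|].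
  eapply Permutation_in; [symmetry; exact Ha | left; auto].
Qed.

Lemma splits_NoDup (p : list nat * list nat) :
  In p (splits t) -> NoDup (m :: fst p) /\ NoDup (snd p).
Proof.
  intros Hp. apply splits_perm in Hp. inversion ND as [|? ? Hmt NDt]; subst.
  assert (NoDup (fst p ++ snd p)) by (eapply Permutation_NoDup; eauto).
  split; [constructor|].
  - intro HA. apply Hmt. eapply Permutation_in; [symmetry; exact Hp|]. apply in_or_app; auto.
  - eapply NoDup_app_remove_r; eauto.
  - eapply NoDup_app_remove_l; eauto.
Qed.

End RepsDistinct.

Lemma reps_pairwise_noniso (f : nat) (s : list nat) :
  NoDup s -> ForallOrdPairs (fun a b => ~ iso a b) (reps f s).
Proof.
  revert s; induction f as [|f IH]; intros s ND; [constructor|].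
  destruct s as [|m [|y t]]; [constructor | repeat constructor |].
  rewrite reps_cons. set (t0 := y :: t) in *.
  apply ForallOrdPairs_flat_map.
  - intros p Hp. destruct (splits_NoDup m t0 ND p Hp) as [N1 N2].
    apply ForallOrdPairs_flat_map.
    + intros a Ha. apply ForallOrdPairs_map. eapply ForallOrdPairs_weaken; [|exact (IH _ N2)].
      intros b b' Hb Hb' Hn Hi. inversion Hi; subst; [contradiction|].
      eapply (left_right_noniso f m t0 ND p p a b'); eauto.
    + eapply ForallOrdPairs_weaken; [|exact (IH _ N1)].
      intros a a' Ha Ha' Hn u v Hu Hv.
      apply in_map_iff in Hu as [b [<- Hb]]. apply in_map_iff in Hv as [b' [<- Hb']].
      intro Hi. inversion Hi; subst; [contradiction|].
      eapply (left_right_noniso f m t0 ND p p a b'); eauto.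
  - inversion ND as [|? ? _ NDt]; subst.
    eapply ForallOrdPairs_weaken; [|exact (splits_distinct t0 NDt)].
    intros p q Hp Hq Hn u v Hu Hv.
    apply in_flat_map in Hu as [a [Ha Hu]]. apply in_map_iff in Hu as [b [<- Hb]].
    apply in_flat_map in Hv as [a' [Ha' Hv]]. apply in_map_iff in Hv as [b' [<- Hb']].
    intro Hi. inversion Hi as [| ? ? ? ? Hiso _ | ? ? ? ? Hiso _]; subst.
    + apply Hn, (Permutation_cons_inv (a := m)). apply iso_leaves in Hiso.
      apply reps_valid in Ha. apply reps_valid in Ha'.
      eapply perm_trans; [symmetry; exact Ha|]. eapply perm_trans; [exact Hiso | exact Ha'].
    + eapply (left_right_noniso f m t0 ND p q a b'); eauto.
Qed.

Lemma reps_BT (n : nat) : BT_reps n (reps n (seq 1 n)).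
Proof.
  split; [|split].
  - intros T HT. exact (reps_valid _ _ _ HT).
  - intros T HT. apply reps_complete; auto; [rewrite length_seq; auto | apply seq_NoDup].
  - apply reps_pairwise_noniso, seq_NoDup.
Qed.

Fixpoint sumN (f : nat -> R) (N : nat) : R :=
  match N with 0 => 0 | S N' => sumN f N' + f N' end.

Lemma sumN_ext (f g : nat -> R) (N : nat) :
  (forall k, (k < N)%nat -> f k = g k) -> sumN f N = sumN g N.
Proof. induction N; simpl; intros H; auto. rewrite IHN, H; auto. Qed.

Lemma sumN_shift (f : nat -> R) (N : nat) : sumN f (S N) = f 0%nat + sumN (fun k => f (S k)) N.
Proof. induction N; simpl in *; [ring|]. rewrite IHN; ring. Qed.

Lemma sumN_plus (f g : nat -> R) (N : nat) : sumN (fun k => f k + g k) N = sumN f N + sumN g N.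
Proof. induction N; simpl; [ring|]. rewrite IHN; ring. Qed.

Lemma sumN_scal (c : R) (f : nat -> R) (N : nat) : sumN (fun k => c * f k) N = c * sumN f N.
Proof. induction N; simpl; [ring|]. rewrite IHN; ring. Qed.

Lemma sumN_rev (f : nat -> R) (N : nat) : sumN f N = sumN (fun k => f (N - 1 - k)%nat) N.
Proof.
  induction N; auto.
  rewrite (sumN_shift (fun k => f (S N - 1 - k)%nat)).
  change (sumN f (S N)) with (sumN f N + f N). rewrite IHN.
  replace (S N - 1 - 0)%nat with N by lia. rewrite Rplus_comm. f_equal.
  apply sumN_ext. intros k Hk. f_equal. lia.
Qed.

Lemma sumN_succ (N : nat) : sumN (fun k => INR (S k)) N = INR N * INR (S N) / 2.
Proof.
  induction N; [simpl; field|]. change (sumN ?g (S N)) with (sumN g N + g N). cbv beta.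
  rewrite IHN, !S_INR. field.
Qed.

(* Σ_{k=0}^{N} (k+1) u(k+1) + Σ_{k=0}^{N} (N+1-k) u(k) = (N+1) Σ_{k=0}^{N+1} u(k):
   the weights of each [u k] add up to N+1. *)
Lemma sumN_complementary_weights (N : nat) (u : nat -> R) :
  sumN (fun k => INR (S k) * u (S k)) (S N) + sumN (fun k => (INR (S N) - INR k) * u k) (S N)
  = INR (S N) * sumN u (S (S N)).
Proof.
  assert (E1 : sumN (fun k => INR (S k) * u (S k)) (S N)
               = sumN (fun k => INR k * u k) (S (S N))).
  { rewrite (sumN_shift (fun k => INR k * u k)). simpl INR at 2. ring. }
  assert (E2 : sumN (fun k => (INR (S N) - INR k) * u k) (S N)
               = sumN (fun k => (INR (S N) - INR k) * u k) (S (S N))).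
  { change (sumN ?g (S (S N))) with (sumN g (S N) + g (S N)). cbv beta. ring. }
  rewrite E1, E2, <- sumN_plus, <- sumN_scal. apply sumN_ext. intros; ring.
Qed.

(* Distributing the elements of [t] in all ways into two sides, counted by
   the sizes (k, |t| - k) of the sides: there are |t|!/(k!(|t|-k)!) of each. *)
Lemma sum_splits_factorial (t : list nat) (g : nat -> nat -> R) :
  sumR (map (fun p => INR (fact (length (fst p))) * INR (fact (length (snd p))) *
                      g (length (fst p)) (length (snd p))) (splits t)) =
  INR (fact (length t)) * sumN (fun k => g k (length t - k)%nat) (S (length t)).
Proof.
  revert g; induction t as [|x t IH]; intro g; [simpl; ring|].
  simpl splits. rewrite map_app, sumR_app, !map_map. simpl fst; simpl snd.
  (* adding [x] to a side of size k turns k! into (k+1)! *)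
  rewrite (sumR_ext _ (fun p => INR (fact (length (fst p))) * INR (fact (length (snd p))) *
       ((fun k l => INR (S k) * g (S k) l) (length (fst p)) (length (snd p))))).
  2:{ intros p _. simpl length. rewrite fact_simpl, mult_INR. ring. }
  rewrite (sumR_ext (fun p => _ * _ * g (length (fst p)) (length (x :: snd p)))
       (fun p => INR (fact (length (fst p))) * INR (fact (length (snd p))) *
       ((fun k l => INR (S l) * g k (S l)) (length (fst p)) (length (snd p))))).
  2:{ intros p _. simpl length. rewrite fact_simpl, mult_INR. ring. }
  pose proof (IH (fun k l => INR (S k) * g (S k) l)) as IH1.
  pose proof (IH (fun k l => INR (S l) * g k (S l))) as IH2.
  cbv beta in IH1, IH2. rewrite IH1, IH2. simpl length. set (N := length t).
  rewrite (sumN_ext (fun k => INR (S (N - k)) * g k (S (N - k))%nat)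
             (fun k => (INR (S N) - INR k) * g k (S N - k)%nat)).
  2:{ intros k Hk. replace (S (N - k)) with (S N - k)%nat by lia.
      rewrite minus_INR by lia. reflexivity. }
  rewrite (sumN_ext (fun k => INR (S k) * g (S k) (N - k)%nat)
             (fun k => INR (S k) * g (S k) (S N - S k)%nat)) by (intros; reflexivity).
  rewrite <- Rmult_plus_distr_l.
  rewrite (sumN_complementary_weights N (fun k => g k (S N - k)%nat)).
  rewrite fact_simpl, mult_INR. ring.
Qed.

(* Σ yule_prod over the trees on k leaves: k!/2^(k-1) *)
Definition yule_mass (k : nat) : R :=
  match k with 0 => 0 | S k' => INR (fact k) / 2 ^ k' end.

Definition coph_mean (k : nat) : R := INR k * (INR k - 1) - 2 * INR k * harm2 k.

Lemma harm2_S (N : nat) : harm2 (S (S N)) = harm2 (S N) + / INR (S (S N)).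
Proof.
  unfold harm2. replace (S (S N) - 1)%nat with (S N) by lia.
  replace (S N - 1)%nat with N by lia. rewrite seq_S, map_app, sumR_app. simpl.
  replace (S (S N)) with (2 + N)%nat by lia. ring.
Qed.

Lemma coph_mean_partial_sums (N : nat) :
  2 * sumN (fun k => coph_mean (S k) + binom2 (S k)) N = INR N * coph_mean (S N).
Proof.
  induction N; [simpl; ring|].
  change (sumN ?g (S N)) with (sumN g N + g N). cbv beta.
  rewrite Rmult_plus_distr_l, IHN. unfold coph_mean, binom2. rewrite harm2_S, !S_INR.
  assert (0 <= INR N) by apply pos_INR. field. lra.
Qed.

(* expected contribution of a root split into sides of sizes k+1 and l *)
Definition split_coph (k l : nat) : R :=
  binom2 (S k) + binom2 l + coph_mean (S k) + coph_mean l.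

(* Averaging over the size k+1 of the side containing a fixed leaf, with weight k+1,
   reproduces coph_mean (N+1). *)
Lemma split_coph_average (N : nat) :
  sumN (fun k => INR (S k) * split_coph k (N - k)) N = INR (S N) * (INR N * coph_mean (S N)) / 2.
Proof.
  set (h := fun j => coph_mean j + binom2 j).
  rewrite (sumN_ext _ (fun k => INR (S k) * h (S k) + INR (S k) * h (N - k)%nat))
    by (intros; unfold split_coph, h; ring).
  rewrite sumN_plus, (sumN_rev (fun k => INR (S k) * h (N - k)%nat)).
  rewrite (sumN_ext (fun k => INR (S (N - 1 - k)) * h (N - (N - 1 - k))%nat)
                    (fun k => INR (N - k) * h (S k))).
  2:{ intros k Hk. f_equal; f_equal; lia. }
  rewrite <- sumN_plus, (sumN_ext _ (fun k => INR (S N) * h (S k))).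
  2:{ intros k Hk. rewrite minus_INR, !S_INR by lia. ring. }
  rewrite sumN_scal. pose proof (coph_mean_partial_sums N). unfold h; cbv beta.
  replace (sumN _ N) with (INR N * coph_mean (S N) / 2) by lra. field.
Qed.

(* the weight of a root split with sides of sizes k+1 and l, per side arrangement *)
Definition split_weight (k l : nat) : R :=
  yule_mass (S k) * yule_mass l / (INR (fact k) * INR (fact l)).

Lemma yule_mass_prod (c g : R) (k l : nat) :
  c * (yule_mass (S k) * yule_mass l) * g
  = INR (fact k) * INR (fact l) * (c * split_weight k l * g).
Proof.
  unfold split_weight. field. split; apply INR_fact_neq_0.
Qed.

Lemma split_weight_value (N k : nat) :
  (k < N)%nat -> split_weight k (N - k) = INR (S k) / 2 ^ (N - 1).
Proof.
  intro Hk. unfold split_weight. replace (N - k)%nat with (S (N - S k)) by lia.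
  unfold yule_mass. rewrite (fact_simpl k), mult_INR.
  replace (N - 1)%nat with (k + (N - S k))%nat by lia. rewrite pow_add.
  field. repeat split; try apply INR_fact_neq_0; apply pow_nonzero; lra.
Qed.

Lemma sum_over_root_splits (N : nat) (g : nat -> R) : (1 <= N)%nat ->
  INR (fact N) * sumN (fun k => / INR N * split_weight k (N - k) * g k) (S N)
  = yule_mass (S N) * (2 / (INR N * INR (S N))) * sumN (fun k => INR (S k) * g k) N.
Proof.
  intro HN. change (sumN ?f (S N)) with (sumN f N + f N). cbv beta.
  rewrite Nat.sub_diag. unfold split_weight at 2. change (yule_mass 0) with 0.
  rewrite (sumN_ext _ (fun k => (/ INR N / 2 ^ (N - 1)) * (INR (S k) * g k)))
    by (intros k Hk; rewrite split_weight_value by auto; unfold Rdiv; ring).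
  rewrite sumN_scal. unfold yule_mass. rewrite (fact_simpl N), mult_INR.
  replace (2 ^ N) with (2 * 2 ^ (N - 1)) by (destruct N; [lia | simpl; rewrite Nat.sub_0_r; ring]).
  assert (INR N <> 0) by (apply not_0_INR; lia).
  assert (2 ^ (N - 1) <> 0) by (apply pow_nonzero; lra).
  assert (INR (fact N) <> 0) by apply INR_fact_neq_0.
  pose proof (pos_INR N). rewrite S_INR. field. simpl; repeat split; auto; lra.
Qed.

Definition mass (D : list tree) : R := sumR (map yule_prod D).
Definition coph_sum (D : list tree) : R := sumR (map (fun T => yule_prod T * coph T) D).

Definition nodes (Da Db : list tree) : list tree := flat_map (fun a => map (Node a) Db) Da.

Lemma nodes_sums (Da Db : list tree) (ka kb N : nat) :
  (forall a, In a Da -> kappa a = ka) -> (forall b, In b Db -> kappa b = kb) ->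
  (ka + kb = S N)%nat ->
  mass (nodes Da Db) = / INR N * mass Da * mass Db /\
  coph_sum (nodes Da Db) =
    / INR N * ((binom2 ka + binom2 kb) * mass Da * mass Db
               + coph_sum Da * mass Db + mass Da * coph_sum Db).
Proof.
  intros Ha Hb Hk. unfold mass, coph_sum, nodes.
  assert (HN : forall a b, In a Da -> In b Db -> INR (kappa (Node a b)) - 1 = INR N).
  { intros a b HA HB. unfold kappa; simpl. rewrite length_app.
    fold (kappa a) (kappa b). rewrite Ha, Hb, Hk, S_INR by auto. ring. }
  rewrite !sumR_flat_map. split.
  - rewrite (sumR_ext _ (fun a => (/ INR N * mass Db) * yule_prod a)), sumR_scal;
      [unfold mass; ring|].
    intros a HA. rewrite map_map, (sumR_ext _ (fun b => (/ INR N * yule_prod a) * yule_prod b)).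
    + rewrite sumR_scal. unfold mass; ring.
    + intros b HB. simpl yule_prod. rewrite HN by auto. ring.
  - rewrite (sumR_ext _ (fun a =>
         (/ INR N * ((binom2 ka + binom2 kb) * mass Db + coph_sum Db)) * yule_prod a
         + (/ INR N * mass Db) * (yule_prod a * coph a))), sumR_lin2; [unfold mass, coph_sum; ring|].
    intros a HA. rewrite map_map, (sumR_ext _ (fun b =>
         (/ INR N * yule_prod a * (coph a + binom2 ka + binom2 kb)) * yule_prod b
         + (/ INR N * yule_prod a) * (yule_prod b * coph b))).
    + rewrite sumR_lin2. unfold mass, coph_sum; ring.
    + intros b HB. simpl yule_prod. simpl coph. rewrite HN, Ha, Hb by auto. ring.
Qed.

Definition reps_sums_hold (f : nat) (s : list nat) : Prop :=
  mass (reps f s) = yule_mass (length s) /\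
  coph_sum (reps f s) = yule_mass (length s) * coph_mean (length s).

(* contribution of one root split (m :: a | b); it vanishes when [b] is empty *)
Lemma split_block_sums (f m : nat) (a b : list nat) :
  reps_sums_hold f b -> (b <> [] -> reps_sums_hold f (m :: a)) ->
  let N := (length a + length b)%nat in
  let Y := yule_mass (S (length a)) * yule_mass (length b) in
  mass (nodes (reps f (m :: a)) (reps f b)) = / INR N * Y * 1 /\
  coph_sum (nodes (reps f (m :: a)) (reps f b)) = / INR N * Y * split_coph (length a) (length b).
Proof.
  intros [Mb Cb] Ha N Y.
  assert (Hk : forall s T, In T (reps f s) -> kappa T = length s)
    by (intros s T HT; apply Permutation_length, (reps_valid f s T HT)).
  destruct (nodes_sums (reps f (m :: a)) (reps f b) (S (length a)) (length b) N
              (Hk (m :: a)) (Hk b) eq_refl) as [M C].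
  rewrite M, C, Mb, Cb. unfold Y, split_coph.
  destruct b as [|b0 B]; [simpl length; change (yule_mass 0) with 0; split; ring|].
  destruct (Ha ltac:(discriminate)) as [Ma Ca]. rewrite Ma, Ca. simpl length. split; ring.
Qed.

Lemma reps_sums (f : nat) (s : list nat) : (length s <= f)%nat -> reps_sums_hold f s.
Proof.
  revert s; induction f as [|f IH]; intros s Hl.
  - destruct s; [|simpl in Hl; lia]. split; unfold mass, coph_sum; simpl; ring.
  - destruct s as [|m [|y t]].
    + split; unfold mass, coph_sum; simpl; ring.
    + unfold reps_sums_hold, mass, coph_sum, coph_mean, harm2. simpl. split; field.
    + unfold reps_sums_hold. rewrite reps_cons. unfold mass, coph_sum. rewrite !sumR_flat_map.
      set (t0 := y :: t) in *. set (N := length t0).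
      assert (HN : (1 <= N)%nat) by (unfold N, t0; simpl; lia).
      assert (Hblock : forall p, In p (splits t0) ->
        reps_sums_hold f (snd p) /\ (snd p <> [] -> reps_sums_hold f (m :: fst p)) /\
        (length (fst p) + length (snd p) = N)%nat).
      { intros p Hp. pose proof (Permutation_length (splits_perm _ _ Hp)) as Hlp.
        rewrite length_app in Hlp. simpl in Hl.
        unfold N, t0 in *; simpl in *. split; [apply IH; lia|]. split; [|lia].
        intro Hne. apply IH. destruct (snd p); [congruence|]. simpl in *; lia. }
      rewrite (sumR_ext _ (fun p => INR (fact (length (fst p))) * INR (fact (length (snd p))) *
          (/ INR N * split_weight (length (fst p)) (length (snd p)) * 1))).
      2:{ intros p Hp. destruct (Hblock p Hp) as (HB & HA & <-).
          rewrite <- yule_mass_prod. exact (proj1 (split_block_sums f m _ _ HB HA)). }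
      rewrite (sumR_ext (fun x => sumR (map (fun T => yule_prod T * coph T) _))
         (fun p => INR (fact (length (fst p))) * INR (fact (length (snd p))) *
          (/ INR N * split_weight (length (fst p)) (length (snd p))
                   * split_coph (length (fst p)) (length (snd p))))).
      2:{ intros p Hp. destruct (Hblock p Hp) as (HB & HA & <-).
          rewrite <- yule_mass_prod. exact (proj2 (split_block_sums f m _ _ HB HA)). }
      rewrite (sum_splits_factorial t0 (fun k l => / INR N * split_weight k l * 1)),
        (sum_splits_factorial t0 (fun k l => / INR N * split_weight k l * split_coph k l)).
      fold N. change (length (m :: t0)) with (S N).
      rewrite (sum_over_root_splits N (fun _ => 1)),
        (sum_over_root_splits N (fun k => split_coph k (N - k))), split_coph_average by auto.
      rewrite (sumN_ext _ (fun k => INR (S k))), sumN_succ by (intros; ring).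
      assert (INR N <> 0) by (apply not_0_INR; lia).
      assert (INR (S N) <> 0) by apply not_0_INR, Nat.neq_succ_0.
      split; field; auto.
Qed.

(* On the canonical representatives, P_Y = 2^(n-1)/n! · yule_prod and Φ = coph. *)
Lemma E_Y_Phi_reps (n : nat) : (1 <= n)%nat -> E_Y_Phi n (reps n (seq 1 n)) = coph_mean n.
Proof.
  intro Hn. unfold E_Y_Phi.
  rewrite (sumR_ext _ (fun T => (2 ^ (n - 1) / INR (fact n)) * (yule_prod T * coph T))).
  2:{ intros T HT. rewrite valid_Phi by exact (reps_valid _ _ _ HT). unfold P_Y. ring. }
  rewrite sumR_scal.
  destruct (reps_sums n (seq 1 n)) as [_ E]; [rewrite length_seq; auto|].
  unfold coph_sum in E. rewrite E, length_seq.
  destruct n as [|n']; [lia|]. unfold yule_mass. rewrite Nat.sub_succ, Nat.sub_0_r.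
  field. split; [apply pow_nonzero; lra | apply INR_fact_neq_0].
Qed.

(* P_Y and Φ are isomorphism invariants, so E_Y(Φ_n) does not depend on the
   system of representatives of BT_n. *)
Lemma E_Y_Phi_invariant (n : nat) (L C : list tree) :
  BT_reps n L -> BT_reps n C -> E_Y_Phi n L = E_Y_Phi n C.
Proof.
  intros [L1 [L2 L3]] [C1 [C2 C3]]. unfold E_Y_Phi.
  apply (sum_over_reps_invariant tree iso iso_sym iso_trans (valid n)); auto.
  - intros a b Ha Hab. unfold P_Y.
    rewrite (iso_yule_prod a b Hab), !valid_Phi, (iso_coph a b Hab); eauto using iso_valid.
  - intros T HT. exact (C2 T (L1 T HT)).
  - intros T HT. exact (L2 T (C1 T HT)).
Qed.

Theorem mainTheorem14 (n : nat) (hn : (1 <= n)%nat) :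
  (exists L, BT_reps n L) /\
  (forall L, BT_reps n L ->
     E_Y_Phi n L = INR n * (INR n - 1) - 2 * INR n * harm2 n).
Proof.
  split; [exists (reps n (seq 1 n)); apply reps_BT|].
  intros L HL. rewrite (E_Y_Phi_invariant n L _ HL (reps_BT n)).
  exact (E_Y_Phi_reps n hn).
Qed.
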